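(* Let $k\ge 1$ be an integer and define $$F_k(y)=\sum_{\lambda\in\mathscr{P}} y^{\ell(\lambda)} z^{\mu_k(\lambda)} q^{|\lambda|},\qquad G_k(y)=\sum_{\lambda\in\mathscr{D}} y^{\ell(\lambda)} z^{\mu_k(\lambda)} q^{|\lambda|}.$$ Then $$F_k(y) - F_k(yq) = \frac{yzq}{(yq;q)_k}F_k(yq^k)$$ and $$G_k(y) - G_k(yq) = yzq(-yq^2;q)_{k-1}G_k(yq^k).$$
   Context: $\mathscr{P}$ is the set of all integer partitions and $\mathscr{D}$ the set of partitions into distinct parts (both including the empty partition). For a partition $\lambda$, $|\lambda|$ is the sum of its parts and $\ell(\lambda)$ its number of parts. For a positive integer $k$, the $k$-measure $\mu_k(\lambda)$ is the length of the longest subsequence of the parts of $\lambda$ (listed in weakly decreasing order) in which the difference between any two consecutive members of the subsequence is at least $k$. The $q$-Pochhammer symbol is $(A;q)_n=\prod_{j=0}^{n-1}(1-Aq^j)$. The series are regarded as formal power series (or with $|q|<1$). *)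

(* Formal power series in q with coefficients in a
   commutative ring R are represented as functions nat -> R. *)
From mathcomp Require Import all_boot all_order all_algebra.
Set Implicit Arguments. Unset Strict Implicit. Unset Printing Implicit Defensive.
Import Order.TTheory GRing.Theory Num.Theory.
Local Open Scope ring_scope.

Definition is_partition (l : seq nat) : bool :=
  sorted geq l && all (fun x => 0 < x)%N l.

Fixpoint seqs_of_len (len : nat) (s : seq nat) : seq (seq nat) :=
  if len is len'.+1 then [seq x :: t | x <- s, t <- seqs_of_len len' s]
  else [:: [::]].

Definition partitions_upto (n : nat) : seq (seq nat) :=
  [seq l <- flatten [seq seqs_of_len len (iota 1 n) | len <- iota 0 n.+1]
     | is_partition l && (sumn l <= n)%N].

(* k-measure: length of a longest subsequence of the parts (listed in weakly
   decreasing order) in which consecutive members differ by at least k *)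
Definition kmeasure (k : nat) (l : seq nat) : nat :=
  \max_(m : (size l).-tuple bool | sorted (fun a b => (b + k <= a)%N) (mask m l))
     size (mask m l).

Definition series (R : Type) := nat -> R.

Section Series.
Variable R : comNzRingType.
Definition sadd (f g : series R) : series R := fun n => f n + g n.
Definition ssub (f g : series R) : series R := fun n => f n - g n.
Definition smul (f g : series R) : series R :=
  fun n => \sum_(i < n.+1) f i * g (n - i)%N.
Definition sone : series R := fun n => if n == 0%N then 1 else 0.
Definition smono (c : R) (j : nat) : series R := fun n => if n == j then c else 0.
Definition spow (f : series R) (e : nat) : series R := iter e (smul f) sone.
Definition sprod (I : Type) (r : seq I) (F : I -> series R) : series R :=
  foldr (fun i acc => smul (F i) acc) sone r.

(* Generating function  sum_{lambda in P} Y^{l(lambda)} z^{mu_k(lambda)} q^{|lambda|}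
   with Y a power series in q (substitution of Y for y); the coefficient of q^n
   only receives contributions from lambda with |lambda| <= n. *)
Definition genfun (P : pred (seq nat)) (k : nat) (z : R) (Y : series R) : series R :=
  fun n => \sum_(l <- partitions_upto n | P l)
      smul (spow Y (size l)) (smono (z ^+ kmeasure k l) (sumn l)) n.

(* F_k and G_k evaluated at y q^j *)
Definition Fk (k : nat) (z : R) (Y : series R) := genfun predT k z Y.
Definition Gk (k : nat) (z : R) (Y : series R) := genfun (fun l => uniq l) k z Y.

Definition poch (y : R) (a m : nat) : series R :=
  sprod (iota 0 m) (fun j => ssub sone (smono y (a + j))).
Definition pochneg (y : R) (a m : nat) : series R :=
  sprod (iota 0 m) (fun j => sadd sone (smono y (a + j))).
End Series.

From mathcomp Require Import all_boot all_order all_algebra zify ring.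
From Stdlib Require Import FunctionalExtensionality.
Set Implicit Arguments. Unset Strict Implicit. Unset Printing Implicit Defensive.
Import GRing.Theory.

(* Substituting y q^j for y adds j to every part, so F_k(y q^j) enumerates the
   partitions all of whose parts exceed j, and F_k(y) - F_k(yq) enumerates
   those having a part 1.  Let D_m be the set of partitions that have a part 1
   and whose other parts all exceed m.  In a partition containing 1 the parts
   <= k contribute exactly one member to a longest k-chain, so inserting or
   deleting a part v with 0 < v <= k preserves the k-measure.  Splitting D_m
   by whether m+1 occurs among the other parts and deleting one part m+1 gives
   (1 - y q^(m+1)) D_m = D_(m+1) for m < k, and for distinct parts
   D_m = (1 + y q^(m+1)) D_(m+1) for 1 <= m < k.  Finally, deleting the part 1
   maps D_k onto the partitions with all parts > k and lowers both the length
   and the k-measure by one, which produces the factor y z q. *)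

(** * Formal power series *)

Section PowerSeries.
Local Open Scope ring_scope.
Variable R : comNzRingType.
Implicit Types f g h : series R.

(* The coefficient of q^n in a product only involves coefficients of index at
   most n, so truncation to {poly R} transports the ring laws to series. *)
Definition trunc N f : {poly R} := \poly_(i < N) f i.

Lemma smul_trunc N f g n : (n < N)%N -> smul f g n = (trunc N f * trunc N g)`_n.
Proof.
move=> ltnN; rewrite coefM; apply: eq_bigr => -[i /=]; rewrite ltnS => lein _.
by rewrite !coef_poly (leq_ltn_trans lein ltnN) (leq_ltn_trans (leq_subr i n) ltnN).
Qed.

Lemma eq_coefMl (p p' q : {poly R}) n :
  (forall j, (j <= n)%N -> p`_j = p'`_j) -> (p * q)`_n = (p' * q)`_n.
Proof. by move=> eq_pp'; rewrite !coefM; apply: eq_bigr => i _; rewrite eq_pp' // -ltnS. Qed.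

Lemma trunc_smul N f g j : (j < N)%N -> (trunc N (smul f g))`_j = (trunc N f * trunc N g)`_j.
Proof. by move=> ltjN; rewrite coef_poly ltjN; apply: smul_trunc. Qed.

Lemma smulC f g : smul f g = smul g f.
Proof. by apply: functional_extensionality => n; rewrite !(smul_trunc _ _ (ltnSn n)) mulrC. Qed.

Lemma smulA f g h : smul (smul f g) h = smul f (smul g h).
Proof.
apply: functional_extensionality => n; set N := n.+1.
rewrite !(smul_trunc _ _ (ltnSn n)) [in RHS]mulrC.
rewrite (@eq_coefMl _ (trunc N f * trunc N g)) => [|j lejn]; last exact: trunc_smul.
rewrite (@eq_coefMl _ (trunc N g * trunc N h) (trunc N f)) => [|j lejn].
  by rewrite [in RHS]mulrC mulrA.
exact: trunc_smul.
Qed.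

Lemma smul_smonol (c : R) j f n :
  smul (smono c j) f n = if (j <= n)%N then c * f (n - j)%N else 0.
Proof.
rewrite /smul /smono; case: leqP => [lejn|ltnj].
  rewrite (bigD1 (Ordinal (leq_ltn_trans lejn (ltnSn n)))) //= eqxx big1 ?addr0 //.
  by move=> i /negbTE neij; rewrite -val_eqE /= in neij; rewrite neij mul0r.
rewrite big1 // => i _; case: eqP => [eij|]; last by rewrite mul0r.
by move: (ltn_ord i); rewrite eij ltnS leqNgt ltnj.
Qed.

Lemma smul1s f : smul (sone R) f = f.
Proof. by apply: functional_extensionality => n; rewrite smul_smonol mul1r subn0. Qed.

Lemma smulBl f g h : smul (ssub f g) h = ssub (smul f h) (smul g h).
Proof.
apply: functional_extensionality => n.
by rewrite /smul /ssub -sumrB; apply: eq_bigr => i _; rewrite mulrBl.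
Qed.

Lemma smulDl f g h : smul (sadd f g) h = sadd (smul f h) (smul g h).
Proof.
apply: functional_extensionality => n.
by rewrite /smul /sadd -big_split; apply: eq_bigr => i _; rewrite mulrDl.
Qed.

Lemma smul_smono (a b : R) i j : smul (smono a i) (smono b j) = smono (a * b) (i + j).
Proof.
apply: functional_extensionality => n; rewrite smul_smonol /smono.
case: leqP => [lein|ltni]; first by rewrite -(eqn_add2l i) subnKC //; case: ifP; rewrite ?mulr0.
by case: eqP => // eni; move: ltni; rewrite eni ltnNge leq_addr.
Qed.

Lemma spow_smono (a : R) j e : spow (smono a j) e = smono (a ^+ e) (j * e).
Proof.
elim: e => [|e IHe]; first by rewrite expr0 muln0.
by rewrite /spow iterS -/(spow _ _) IHe smul_smono exprS mulnS.
Qed.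

Lemma sprod_iota0S len (c : nat -> series R) :
  sprod (iota 0 len.+1) c = smul (c 0%N) (sprod (iota 0 len) (fun j => c j.+1)).
Proof. by rewrite /sprod /= -[1%N]addn0 iotaDl foldr_map. Qed.

Lemma sprod_telescope (c g : nat -> series R) len :
  (forall j, (j < len)%N -> smul (c j) (g j) = g j.+1) ->
  smul (sprod (iota 0 len) c) (g 0%N) = g len.
Proof.
elim: len c g => [|len IHlen] c g step; first exact: smul1s.
rewrite sprod_iota0S [smul (c 0%N) _]smulC smulA step //.
by apply: (IHlen (fun j => c j.+1) (fun j => g j.+1)) => j ltjl; apply: step.
Qed.

Lemma sprod_telescope_inv (c g : nat -> series R) len :
  (forall j, (j < len)%N -> g j = smul (c j) (g j.+1)) ->
  g 0%N = smul (sprod (iota 0 len) c) (g len).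
Proof.
elim: len c g => [|len IHlen] c g step; first by rewrite smul1s.
rewrite sprod_iota0S smulA (step 0%N) //; congr smul.
by apply: (IHlen (fun j => c j.+1) (fun j => g j.+1)) => j ltjl; apply: step.
Qed.

End PowerSeries.

(** * Partitions as weakly decreasing lists *)

Lemma geq_total : total geq.
Proof. by move=> m n; apply: leq_total. Qed.

Lemma geq_transitive : transitive geq.
Proof. by move=> m n p /= lenm lepn; apply: leq_trans lepn lenm. Qed.

Lemma geq_antisym : antisymmetric geq.
Proof. by move=> m n /andP[lenm lemn]; apply/anti_leq/andP. Qed.

Definition add_part (v : nat) (l : seq nat) : seq nat := sort geq (v :: l).

Lemma perm_add_part v l : perm_eq (add_part v l) (v :: l).
Proof. by rewrite perm_sort. Qed.

Lemma mem_add_part v l : add_part v l =i v :: l.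
Proof. exact: perm_mem (perm_add_part v l). Qed.

Lemma count_add_part (p : pred nat) v l : count p (add_part v l) = p v + count p l.
Proof. by rewrite (permP (perm_add_part v l)). Qed.

Lemma uniq_add_part v l : uniq (add_part v l) = (v \notin l) && uniq l.
Proof. by rewrite (perm_uniq (perm_add_part v l)). Qed.

Lemma add_part_rem v l : v \in l -> sorted geq l -> add_part v (rem v l) = l.
Proof.
move=> vl sorted_l; rewrite -[RHS](sorted_sort geq_transitive sorted_l).
by apply/(perm_sortP geq_total geq_transitive geq_antisym); rewrite perm_sym perm_to_rem.
Qed.

Lemma rem_add_part v l : sorted geq l -> rem v (add_part v l) = l.
Proof.
move=> sorted_l; apply: (sorted_eq geq_transitive geq_antisym) => //.
  exact/(subseq_sorted geq_transitive (rem_subseq _ _))/sort_sorted/geq_total.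
have v_add : v \in add_part v l by rewrite mem_add_part mem_head.
by rewrite -(perm_cons v) -(permPl (perm_to_rem v_add)) perm_add_part.
Qed.

Lemma is_partition_add_part v l : 0 < v -> is_partition l -> is_partition (add_part v l).
Proof.
move=> v_gt0 /andP[_ l_pos].
by rewrite /is_partition (sort_sorted geq_total) (perm_all _ (perm_add_part v l)) /= v_gt0.
Qed.

Lemma is_partition_rem v l : is_partition l -> is_partition (rem v l).
Proof.
case/andP=> sorted_l /allP l_pos.
rewrite /is_partition (subseq_sorted geq_transitive (rem_subseq v l)) //=.
by apply/allP => x /mem_rem /l_pos.
Qed.

Lemma is_partition_shift j l : is_partition l -> is_partition (map (addn j) l).
Proof.
case/andP=> sorted_l l_pos; rewrite /is_partition sorted_map all_map.
rewrite (sub_sorted _ sorted_l) => [|a b]; last by rewrite /relpre /= leq_add2l.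
by apply: sub_all l_pos => x /= x_gt0; rewrite addn_gt0 x_gt0 orbT.
Qed.

Lemma is_partition_unshift j l :
  all (fun x => j < x) l -> is_partition l -> is_partition (map (subn^~ j) l).
Proof.
move=> l_gtj /andP[sorted_l _]; rewrite /is_partition sorted_map all_map.
rewrite (sub_sorted _ sorted_l) => [|a b]; last exact: leq_sub2r.
by apply: sub_all l_gtj => x /=; rewrite subn_gt0.
Qed.

Lemma sumn_shift j l : sumn (map (addn j) l) = j * size l + sumn l.
Proof. by elim: l => [|a l IHl] /=; rewrite ?muln0 // IHl mulnS; lia. Qed.

Lemma map_addnK j : cancel (map (addn j)) (map (subn^~ j)).
Proof. by move=> l; rewrite -map_comp map_id_in // => x _ /=; rewrite addKn. Qed.

Lemma map_subnK j l : all (fun x => j < x) l -> map (addn j) (map (subn^~ j) l) = l.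
Proof.
move=> /allP l_gtj; rewrite -map_comp map_id_in // => x /l_gtj /= ltjx.
by rewrite subnKC // ltnW.
Qed.

Lemma leq_sumn x l : x \in l -> x <= sumn l.
Proof. by elim: l => //= a l IHl; rewrite inE => /predU1P[->|/IHl]; lia. Qed.

Lemma leq_size_sumn l : all (fun x => 0 < x) l -> size l <= sumn l.
Proof. by elim: l => //= a l IHl /andP[a_gt0 /IHl]; lia. Qed.

Lemma mem_seqs_of_len len s t :
  (t \in seqs_of_len len s) = (size t == len) && all (mem s) t.
Proof.
elim: len t => [|len IHlen] t /=; first by rewrite inE; case: t.
apply/allpairsP/idP => [[[a u] /= [sa ulen ->]] | ].
  by move: ulen; rewrite IHlen => /andP[ulen su]; apply/and3P.
case: t => [|b u] //= /andP[ulen /andP[sb su]].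
by exists (b, u); split=> //; rewrite IHlen; apply/andP.
Qed.

Lemma uniq_seqs_of_len len s : uniq s -> uniq (seqs_of_len len s).
Proof.
move=> uniq_s; elim: len => [|len IHlen] //=.
by apply: allpairs_uniq => // -[a u] [b w] _ _ /= [-> ->].
Qed.

Lemma mem_partitions_upto n l :
  (l \in partitions_upto n) = is_partition l && (sumn l <= n).
Proof.
rewrite mem_filter andb_idr // => /andP[/andP[_ l_pos] le_ln].
apply/flattenP; exists (seqs_of_len (size l) (iota 1 n)).
  by apply: (map_f (seqs_of_len^~ _)); rewrite mem_iota ltnS (leq_trans (leq_size_sumn l_pos)).
rewrite mem_seqs_of_len eqxx; apply/allP => x xl; rewrite /= mem_iota.
by rewrite (allP l_pos) //= add1n ltnS (leq_trans (leq_sumn xl)).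
Qed.

Lemma uniq_partitions_upto n : uniq (partitions_upto n).
Proof.
apply: filter_uniq; elim: (iota 0 n.+1) (iota_uniq 0 n.+1) => //= a r IHr /andP[ar uniq_r].
rewrite cat_uniq uniq_seqs_of_len ?iota_uniq ?IHr // andbT.
apply/hasPn => t /flattenP[_ /mapP[b br ->]]; rewrite !mem_seqs_of_len.
by case/andP=> /eqP tb _; apply/negP => /andP[/eqP ta _]; rewrite -ta tb br in ar.
Qed.

Definition partitions (n : nat) : seq (seq nat) :=
  [seq l <- partitions_upto n | sumn l == n].

Lemma mem_partitions n l : (l \in partitions n) = is_partition l && (sumn l == n).
Proof.
rewrite mem_filter mem_partitions_upto.
by case: eqP => [->|_]; rewrite ?leqnn ?andbT ?andbF.
Qed.

Lemma uniq_partitions n : uniq (partitions n).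
Proof. exact/filter_uniq/uniq_partitions_upto. Qed.

(** * The k-measure *)

Definition kgap (k : nat) : rel nat := fun a b => b + k <= a.

Lemma kgap_trans k : transitive (kgap k).
Proof. by move=> b a c; rewrite /kgap; lia. Qed.

Lemma leq_kmeasure k l s : subseq s l -> sorted (kgap k) s -> size s <= kmeasure k l.
Proof.
case/subseqP=> m size_m -> sorted_s; have /eqP size_m' := size_m.
pose t : (size l).-tuple bool := Tuple size_m'.
exact: (@leq_bigmax_cond _ (fun t : (size l).-tuple bool => sorted (kgap k) (mask t l))
  (fun t => size (mask t l)) t).
Qed.

Lemma kmeasure_witness k l :
  exists s, [/\ subseq s l, sorted (kgap k) s & kmeasure k l = size s].
Proof.
have ex_t : 0 < #|[pred t : (size l).-tuple bool | sorted (kgap k) (mask t l)]|.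
  by apply/card_gt0P; exists (nseq_tuple (size l) false); rewrite inE /= mask_false.
have [t sorted_t max_t] :=
  eq_bigmax_cond (fun t : (size l).-tuple bool => size (mask t l)) ex_t.
by exists (mask t l); split; rewrite ?mask_subseq.
Qed.

Lemma kmeasure_shift k j l : kmeasure k (map (addn j) l) = kmeasure k l.
Proof.
have sorted_shift s : sorted (kgap k) (map (addn j) s) = sorted (kgap k) s.
  rewrite sorted_map; case: s => //= a s; apply: eq_path => b c.
  by rewrite /relpre /kgap /= -addnA leq_add2l.
apply/eqP; rewrite eqn_leq; apply/andP; split.
  have [_ [/subseqP[m _ ->] + ->]] := kmeasure_witness k (map (addn j) l).
  by rewrite -map_mask sorted_shift size_map; apply/leq_kmeasure/mask_subseq.
have [s [sub_sl sorted_s ->]] := kmeasure_witness k l.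
by rewrite -(size_map (addn j)) leq_kmeasure ?map_subseq ?sorted_shift.
Qed.

Lemma sorted_geq_filter_cat k l : sorted geq l ->
  filter (fun x => k < x) l ++ filter (fun x => x <= k) l = l.
Proof.
elim: l => //= a l IHl path_al; have /allP le_la := order_path_min geq_transitive path_al.
case: (leqP a k) => [le_ak|_] /=; last by rewrite IHl ?(path_sorted path_al).
have le_lk : all (fun x => x <= k) l by apply/allP => x /le_la /= le_xa; apply: leq_trans le_ak.
rewrite (all_filterP le_lk) (_ : filter _ l = [::]) //; apply/nilP.
by rewrite /nilp size_filter eqn0Ngt -has_count; apply/hasPn => x /(allP le_lk); rewrite -leqNgt.
Qed.

Lemma count_leq_kgap k s : all (fun x => 0 < x) s -> sorted (kgap k) s ->
  count (fun x => x <= k) s <= 1.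
Proof.
elim: s => //= a s IHs /andP[a_gt0 s_pos] path_as.
have /allP gap_a := order_path_min (@kgap_trans k) path_as.
case: (leqP a k) => [le_ak|_] /=; last by rewrite add0n IHs ?(path_sorted path_as).
rewrite add1n ltnS leqn0 eqn0Ngt -has_count; apply/hasPn => x xs /=.
by move: (gap_a x xs) (allP s_pos x xs); rewrite /kgap -ltnNge; lia.
Qed.

(* A k-chain contains at most one part <= k, and 1 can be appended to any
   k-chain of parts > k. *)
Lemma kmeasure_part1 k l : 0 < k -> is_partition l -> 1 \in l ->
  kmeasure k l = (kmeasure k (filter (fun x => k < x) l)).+1.
Proof.
move=> k_gt0 /andP[sorted_l l_pos] l1; apply/eqP; rewrite eqn_leq; apply/andP; split.
  have [s [sub_sl sorted_s ->]] := kmeasure_witness k l.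
  rewrite -(count_predC (fun x => k < x)) -[(kmeasure _ _).+1]addn1; apply: leq_add.
    rewrite -size_filter leq_kmeasure ?(sorted_filter (@kgap_trans k)) //.
    by rewrite subseq_filter filter_all (subseq_trans (filter_subseq _ _) sub_sl).
  rewrite (eq_count (a2 := fun x => x <= k)) => [|x]; last by rewrite /= -leqNgt.
  by apply: count_leq_kgap sorted_s; apply/allP => x /(mem_subseq sub_sl) /(allP l_pos).
have [s [sub_s sorted_s ->]] := kmeasure_witness k (filter (fun x => k < x) l).
rewrite -(size_rcons s 1); apply: leq_kmeasure.
  rewrite -cats1 -(sorted_geq_filter_cat k sorted_l) cat_subseq //.
  by rewrite sub1seq mem_filter k_gt0 l1.
case: s sub_s sorted_s => // a s sub_s; rewrite /= rcons_path => -> /=.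
have : last a s \in filter (fun x => k < x) l by apply: (mem_subseq sub_s); apply: mem_last.
by rewrite mem_filter /kgap add1n => /andP[].
Qed.

Lemma filter_add_part (p : pred nat) v l : ~~ p v -> sorted geq l ->
  filter p (add_part v l) = filter p l.
Proof.
move=> npv sorted_l; rewrite /add_part (filter_sort geq_total geq_transitive) /= (negbTE npv).
exact/(sorted_sort geq_transitive)/(sorted_filter geq_transitive).
Qed.

Lemma kmeasure_add_part k v l : 0 < v <= k -> is_partition l -> 1 \in l ->
  kmeasure k (add_part v l) = kmeasure k l.
Proof.
case/andP=> v_gt0 le_vk part_l l1; have k_gt0 := leq_trans v_gt0 le_vk.
have l1' : 1 \in add_part v l by rewrite mem_add_part inE l1 orbT.
rewrite (kmeasure_part1 k_gt0 (is_partition_add_part v_gt0 part_l) l1').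
by rewrite (kmeasure_part1 k_gt0 part_l l1) filter_add_part -?leqNgt //; case/andP: part_l.
Qed.

Lemma kmeasure_add_part1 k h : 0 < k -> is_partition h -> all (fun x => k < x) h ->
  kmeasure k (add_part 1 h) = (kmeasure k h).+1.
Proof.
move=> k_gt0 part_h h_gtk.
rewrite (kmeasure_part1 k_gt0 (is_partition_add_part (ltn0Sn 0) part_h)) ?mem_add_part ?mem_head //.
by rewrite filter_add_part -?leqNgt ?(all_filterP h_gtk) //; case/andP: part_h.
Qed.

(** * Generating functions *)

Definition part1_rest_gt (m : nat) (l : seq nat) : bool :=
  (1 \in l) && all (fun x => m < x) (rem 1 l).

Lemma all_gtS m s : all (fun x => m.+1 < x) s = all (fun x => m < x) s && (m.+1 \notin s).
Proof.
elim: s => //= x s ->; rewrite inE negb_or andbACA; congr (_ && _).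
by rewrite [in LHS]ltn_neqAle andbC.
Qed.

Lemma perm_rem1_add_part v l : 1 \in l -> perm_eq (rem 1 (add_part v l)) (v :: rem 1 l).
Proof.
move=> l1; have l1' : 1 \in add_part v l by rewrite mem_add_part inE l1 orbT.
apply/permP => p; have := permP (perm_to_rem l1) p; have := permP (perm_to_rem l1') p.
by rewrite count_add_part /=; lia.
Qed.

Lemma part1_rest_gt_add_part m v l : 1 \in l ->
  part1_rest_gt m (add_part v l) = (m < v) && part1_rest_gt m l.
Proof.
move=> l1; rewrite /part1_rest_gt mem_add_part inE l1 orbT /=.
by rewrite (perm_all _ (perm_rem1_add_part v l1)).
Qed.

Lemma mem1_rem v l : 1 \in l -> v \in rem 1 l -> 1 \in rem v l.
Proof. by move=> l1; case: (eqVneq v 1) => [-> // | v_ne1] _; rewrite rem_mem // eq_sym. Qed.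

Lemma part1_rest_gt_rem m v l : sorted geq l -> 1 \in l -> v \in rem 1 l ->
  part1_rest_gt m l = (m < v) && part1_rest_gt m (rem v l).
Proof.
move=> sorted_l l1 vr; rewrite -{1}(add_part_rem (mem_rem vr) sorted_l).
by rewrite part1_rest_gt_add_part ?mem1_rem.
Qed.

Definition shift_invariant (P : pred (seq nat)) : Prop :=
  forall j l, all (fun x => j < x) l -> P (map (subn^~ j) l) = P l.

Lemma shift_invariant_uniq : shift_invariant (fun l => uniq l).
Proof.
move=> j l /allP l_gtj; apply: map_inj_in_uniq => a b /l_gtj /ltnW lt_ja /l_gtj /ltnW lt_jb.
by move/(congr1 (addn j)); rewrite !subnKC.
Qed.

Lemma big_uniq_bij (R : Type) (idx : R) (op : Monoid.com_law idx) (I J : eqType)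
    (s : seq I) (t : seq J) (P : pred I) (Q : pred J) (F : I -> R) (G : J -> R)
    (f : I -> J) (g : J -> I) :
    uniq s -> uniq t ->
    (forall x, x \in s -> P x -> [/\ f x \in t, Q (f x), g (f x) = x & F x = G (f x)]) ->
    (forall x, x \in t -> Q x -> [/\ g x \in s, P (g x) & f (g x) = x]) ->
  \big[op/idx]_(x <- s | P x) F x = \big[op/idx]_(x <- t | Q x) G x.
Proof.
move=> uniq_s uniq_t fP gQ; rewrite -big_filter -[RHS]big_filter.
transitivity (\big[op/idx]_(x <- filter P s) G (f x)).
  by apply: eq_big_seq => x; rewrite mem_filter => /andP[Px sx]; case: (fP x sx Px).
rewrite -(big_map f predT G); apply/perm_big/uniq_perm; rewrite ?filter_uniq //.
  rewrite map_inj_in_uniq ?filter_uniq // => a b.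
  rewrite !mem_filter => /andP[Pa sa] /andP[Pb sb] fab.
  by case: (fP a sa Pa) => _ _ <- _; case: (fP b sb Pb) => _ _ <- _; rewrite fab.
move=> x; rewrite mem_filter; apply/mapP/andP => [[a] | [Qx tx]].
  by rewrite mem_filter => /andP[Pa sa] ->; case: (fP a sa Pa).
by case: (gQ x tx Qx) => sgx Pgx fgx; exists (g x); rewrite ?mem_filter ?Pgx.
Qed.

Section PartitionGF.
Local Open Scope ring_scope.
Variables (R : comNzRingType) (k : nat) (y z : R).
Implicit Types (P Q : pred (seq nat)) (l : seq nat).

Definition pweight l : R := y ^+ size l * z ^+ kmeasure k l.

Definition pgf P : series R := fun n => \sum_(l <- partitions n | P l) pweight l.

Lemma eq_pgf P Q : (forall l, is_partition l -> P l = Q l) -> pgf P = pgf Q.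
Proof.
move=> eqPQ; apply: functional_extensionality => n; rewrite /pgf big_seq_cond [RHS]big_seq_cond.
by apply: eq_bigl => l; case: (boolP (_ \in _)) => //; rewrite mem_partitions => /andP[/eqPQ ->].
Qed.

Lemma pgf_split P A :
  pgf P = sadd (pgf (fun l => P l && A l)) (pgf (fun l => P l && ~~ A l)).
Proof. by apply: functional_extensionality => n; rewrite /pgf /sadd (bigID A). Qed.

Lemma genfun_smono P j : shift_invariant P ->
  genfun P k z (smono y j) = pgf (fun l => all (fun x => (j < x)%N) l && P l).
Proof.
move=> P_shift; apply: functional_extensionality => n.
transitivity (\sum_(l <- partitions_upto n | P l && (n == j * size l + sumn l)%N) pweight l).
  by rewrite /genfun big_mkcondr; apply: eq_bigr => l _; rewrite spow_smono smul_smono.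
apply: (big_uniq_bij _ (f := map (addn j)) (g := map (subn^~ j)));
  rewrite ?uniq_partitions_upto ?uniq_partitions //.
  move=> l; rewrite mem_partitions_upto => /andP[part_l _] /andP[Pl /eqP n_eq].
  have l_gt0 := allP (proj2 (andP part_l)).
  have shift_gtj : all (fun x => (j < x)%N) (map (addn j) l).
    by rewrite all_map; apply/allP => x /l_gt0 /= x_gt0; rewrite -[j in (j < _)%N]addn0 ltn_add2l.
  rewrite mem_partitions is_partition_shift // sumn_shift -n_eq eqxx shift_gtj map_addnK.
  rewrite -(P_shift j) ?map_addnK //.
  by rewrite /pweight size_map kmeasure_shift.
move=> l; rewrite mem_partitions => /andP[part_l /eqP sum_l] /andP[l_gtj Pl].
move: sum_l; rewrite -{1}(map_subnK l_gtj) sumn_shift => n_eq.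
rewrite mem_partitions_upto is_partition_unshift // P_shift // Pl -n_eq eqxx map_subnK //.
by split=> //; rewrite leq_addl.
Qed.

Lemma pgf_add_part P Q v d : (0 < v)%N ->
  (forall l, is_partition l -> Q l ->
     P (add_part v l) /\ kmeasure k (add_part v l) = (kmeasure k l + d)%N) ->
  (forall l, is_partition l -> P l -> v \in l /\ Q (rem v l)) ->
  pgf P = smul (smono (y * z ^+ d) v) (pgf Q).
Proof.
move=> v_gt0 addP remP; apply: functional_extensionality => n; rewrite smul_smonol.
case: leqP => [le_vn | lt_nv]; last first.
  rewrite /pgf big_seq_cond big_pred0 // => l; apply/negP; rewrite mem_partitions.
  case/andP=> /andP[part_l /eqP sum_l] /(remP l part_l)[vl _].
  by move: lt_nv; rewrite -sum_l ltnNge leq_sumn.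
rewrite /pgf big_distrr /=.
apply: (big_uniq_bij _ (f := rem v) (g := add_part v)); rewrite ?uniq_partitions //.
  move=> l; rewrite mem_partitions => /andP[part_l /eqP sum_l] Pl.
  have [vl Q_rem] := remP l part_l Pl.
  have l_eq : add_part v (rem v l) = l by rewrite add_part_rem //; case/andP: part_l.
  have [_] := addP _ (is_partition_rem v part_l) Q_rem; rewrite l_eq => k_eq.
  have := perm_sumn (perm_to_rem vl); rewrite sum_l /= => n_eq.
  rewrite mem_partitions is_partition_rem // Q_rem; split=> //.
    by apply/eqP; rewrite n_eq addKn.
  by rewrite /pweight k_eq (perm_size (perm_to_rem vl)) /= exprS exprD; ring.
move=> l; rewrite mem_partitions => /andP[part_l /eqP sum_l] Ql.
have [P_add _] := addP l part_l Ql.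
rewrite mem_partitions is_partition_add_part // (perm_sumn (perm_add_part v l)) /= sum_l.
by rewrite subnKC // eqxx rem_add_part //; case/andP: part_l.
Qed.

Lemma genfun_sub_smono1 P : shift_invariant P ->
  ssub (genfun P k z (smono y 0)) (genfun P k z (smono y 1)) = pgf (fun l => P l && (1%N \in l)).
Proof.
move=> P_shift; rewrite !genfun_smono // (pgf_split _ (fun l => 1%N \in l)).
have -> : pgf (fun l => (all (fun x => (0 < x)%N) l && P l) && ~~ (1%N \in l)) =
          pgf (fun l => all (fun x => (1 < x)%N) l && P l).
  by apply: eq_pgf => l /andP[_ l_pos]; rewrite all_gtS l_pos andbC.
have -> : pgf (fun l => (all (fun x => (0 < x)%N) l && P l) && (1%N \in l)) =
          pgf (fun l => P l && (1%N \in l)).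
  by apply: eq_pgf => l /andP[_ ->].
by apply: functional_extensionality => n; rewrite /ssub /sadd addrK.
Qed.

End PartitionGF.

Section Chains.
Variables (R : comNzRingType) (k : nat) (y z : R).
Hypothesis k_gt0 : (0 < k)%N.
Local Notation gf := (pgf k y z).

Lemma pgf_part1_rest_gt_split P m :
  gf (fun l => P l && part1_rest_gt m l) =
  sadd (gf (fun l => P l && part1_rest_gt m.+1 l))
       (gf (fun l => (P l && part1_rest_gt m l) && (m.+1 \in rem 1 l))).
Proof.
rewrite [LHS](pgf_split _ _ _ _ (fun l => m.+1 \in rem 1 l)).
have -> : gf (fun l => (P l && part1_rest_gt m l) && (m.+1 \notin rem 1 l)) =
          gf (fun l => P l && part1_rest_gt m.+1 l).
  by apply: eq_pgf => l _; rewrite /part1_rest_gt all_gtS !andbA.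
by apply: functional_extensionality => n; rewrite /sadd addrC.
Qed.

Lemma pgf_part1_step m : (m < k)%N ->
  smul (ssub (sone R) (smono y m.+1)) (gf (part1_rest_gt m)) = gf (part1_rest_gt m.+1).
Proof.
move=> lt_mk.
have rem_eq : gf (fun l => part1_rest_gt m l && (m.+1 \in rem 1 l)) =
              smul (smono y m.+1) (gf (part1_rest_gt m)).
  have := @pgf_add_part _ k y z _ (part1_rest_gt m) m.+1 0; rewrite expr0 mulr1; apply=> //.
    move=> l part_l /[dup] /andP[l1 _] rest_l; split; last by rewrite kmeasure_add_part ?addn0.
    by rewrite part1_rest_gt_add_part // rest_l ltnSn (perm_mem (perm_rem1_add_part _ l1)) mem_head.
  move=> l /andP[sorted_l _] /andP[/[dup] /andP[l1 _] rest_l vr].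
  by move: rest_l; rewrite (part1_rest_gt_rem _ sorted_l l1 vr) (mem_rem vr) => /andP[].
have split_eq := pgf_part1_rest_gt_split predT m; rewrite /= rem_eq in split_eq.
apply: functional_extensionality => n.
by rewrite smulBl smul1s /ssub {1}split_eq /sadd addrK.
Qed.

Lemma pgf_uniq_part1_step m : (0 < m < k)%N ->
  gf (fun l => uniq l && part1_rest_gt m l) =
  smul (sadd (sone R) (smono y m.+1)) (gf (fun l => uniq l && part1_rest_gt m.+1 l)).
Proof.
case/andP=> m_gt0 lt_mk.
have rem_eq : gf (fun l => (uniq l && part1_rest_gt m l) && (m.+1 \in rem 1 l)) =
              smul (smono y m.+1) (gf (fun l => uniq l && part1_rest_gt m.+1 l)).
  have := @pgf_add_part _ k y z _ (fun l => uniq l && part1_rest_gt m.+1 l) m.+1 0.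
  rewrite expr0 mulr1; apply=> //.
    move=> l part_l /andP[uniq_l /[dup] /andP[l1 rest_l] rest_l'].
    move: rest_l; rewrite all_gtS => /andP[rest_gtm vr].
    have vl : m.+1 \notin l by apply: contra vr => vl; rewrite rem_mem // eqSS -lt0n.
    rewrite uniq_add_part vl uniq_l part1_rest_gt_add_part // ltnSn.
    rewrite /part1_rest_gt l1 rest_gtm (perm_mem (perm_rem1_add_part _ l1)) mem_head.
    by split; last rewrite kmeasure_add_part ?addn0.
  move=> l /andP[sorted_l _] /andP[/andP[uniq_l /[dup] /andP[l1 _] rest_l] vr].
  move: rest_l; rewrite (part1_rest_gt_rem _ sorted_l l1 vr) => /andP[_ /andP[l1' rest_gtm]].
  rewrite (mem_rem vr) rem_uniq // /part1_rest_gt l1' all_gtS rest_gtm /=; split=> //.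
  by apply: contraFN (mem_rem_uniqF m.+1 uniq_l); apply: mem_rem.
by rewrite pgf_part1_rest_gt_split rem_eq smulDl smul1s.
Qed.

Lemma pgf_part1_last P : (forall h, all (fun x => (k < x)%N) h -> P (add_part 1 h) = P h) ->
  gf (fun l => P l && part1_rest_gt k l) =
  smul (smono (y * z)%R 1) (gf (fun h => all (fun x => (k < x)%N) h && P h)).
Proof.
move=> P_add; rewrite -[z in (y * z)%R]expr1.
apply: pgf_add_part => // [h part_h /andP[h_gtk Ph] | l /andP[sorted_l _]].
  rewrite P_add // Ph /part1_rest_gt mem_add_part mem_head rem_add_part ?h_gtk.
    by rewrite kmeasure_add_part1 ?addn1.
  by case/andP: part_h.
case/andP=> Pl /andP[l1 rest_gtk].
by split=> //; rewrite -P_add // add_part_rem // rest_gtk.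
Qed.

Lemma pgf_part1_rest_gt0 P :
  gf (fun l => P l && (1 \in l)) = gf (fun l => P l && part1_rest_gt 0 l).
Proof.
apply: eq_pgf => l /(is_partition_rem 1) /andP[_ rest_gt0].
by rewrite /part1_rest_gt rest_gt0 andbT.
Qed.

Lemma pgf_uniq_part1_rest_gt1 :
  gf (fun l => uniq l && (1 \in l)) = gf (fun l => uniq l && part1_rest_gt 1 l).
Proof.
apply: eq_pgf => l /(is_partition_rem 1) /andP[_ rest_gt0]; apply/andb_id2l => uniq_l.
by rewrite /part1_rest_gt all_gtS rest_gt0 mem_rem_uniqF // andbT.
Qed.

Lemma pgf_part1_chain : smul (poch y 1 k) (gf (part1_rest_gt 0)) = gf (part1_rest_gt k).
Proof.
by apply: (sprod_telescope (g := fun j => gf (part1_rest_gt j))) => j; apply: pgf_part1_step.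
Qed.

Lemma pgf_uniq_part1_chain :
  gf (fun l => uniq l && part1_rest_gt 1 l) =
  smul (pochneg y 2 k.-1) (gf (fun l => uniq l && part1_rest_gt k l)).
Proof.
have := @sprod_telescope_inv _ (fun j => sadd (sone R) (smono y (2 + j)))
  (fun j => gf (fun l => uniq l && part1_rest_gt j.+1 l)) k.-1.
rewrite prednK //; apply=> j lt_jk; apply: pgf_uniq_part1_step.
by rewrite /= -ltn_predRL.
Qed.

End Chains.

Local Open Scope ring_scope.

Theorem lemma2p1 (R : comNzRingType) (k : nat) (y z : R) : (1 <= k)%N ->
  (forall n : nat,
     smul (poch y 1 k) (ssub (Fk k z (smono y 0)) (Fk k z (smono y 1))) n
     = smul (smono (y * z) 1) (Fk k z (smono y k)) n) /\
  (forall n : nat,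
     ssub (Gk k z (smono y 0)) (Gk k z (smono y 1)) n
     = smul (smono (y * z) 1) (smul (pochneg y 2 k.-1) (Gk k z (smono y k))) n).
Proof.
move=> k_gt0; split=> n; apply: (congr1 (fun f => f n)).
  rewrite /Fk genfun_sub_smono1 // pgf_part1_rest_gt0 pgf_part1_chain //.
  by rewrite genfun_smono // -(pgf_part1_last y z k_gt0 (P := predT)).
rewrite /Gk (genfun_sub_smono1 _ _ _ shift_invariant_uniq) pgf_uniq_part1_rest_gt1.
rewrite pgf_uniq_part1_chain // (genfun_smono _ _ _ _ shift_invariant_uniq).
rewrite (pgf_part1_last y z k_gt0 (P := fun l => uniq l)) => [|h h_gtk].
  by rewrite -smulA [smul (pochneg _ _ _) _]smulC smulA.
rewrite uniq_add_part; apply: andb_idl => _.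
by apply/negP => /(allP h_gtk); rewrite ltnNge k_gt0.
Qed.
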